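(* For each $0\le s\le L$, the space $V_L^s$ is stable under $Q(z;p)$, and $Q(z;p)|_{V_L^s}$ is a polynomial in $z$ of degree exactly $s$ with coefficients in $\mathrm{End}(V_L^s)[[p]]$.
   Context: All vector spaces are over $\mathbb C$. Let $V^\infty$ have basis $(w_i)_{i\in\mathbb Z_{\ge0}}$, graded with $w_i$ of weight $i$. For $\ell\in\mathbb C$, $\mathcal W^\ell$ denotes the representation of the Yangian-type algebra $\mathbb Y^1$ on $V^\infty$ given by the operators ($w_{-1}=0$): $t_{11}(z)w_i=(z+\ell-i)w_i$, $t_{12}(z)w_i=(\ell-i)w_{i+1}$, $t_{21}(z)w_i=iw_{i-1}$, $t_{22}(z)w_i=(z+i)w_i$, and $T^{\mathcal W^\ell}(z)=\sum_{i,j=1}^2E_{ij}\otimes t_{ij}(z)\in\mathrm{End}(\mathbb C^2\otimes V^\infty)[z]$ where $E_{ij}$ are the elementary matrices for a basis $(v_1,v_2)$ of $\mathbb C^2$ (these satisfy the RTT relation $R^{12}(z-w)T^{13}(z)T^{23}(w)=T^{23}(w)T^{13}(z)R^{12}(z-w)$ with Yang's $R(z)=\frac{z}{z+1}\mathrm{Id}+\frac{1}{z+1}P$, $P$ the flip). Fix $L\in\mathbb Z_{>0}$ and $a_1,\dots,a_L\in\mathbb C^\times$. Let $V_L=(\mathbb C^2)^{\otimes L}$ and, for $0\le s\le L$, let $V_L^s$ be the span of the $v_{i_1}\otimes\cdots\otimes v_{i_L}$ in which the index $1$ appears exactly $s$ times. For a graded module $W=\bigoplus_\alpha W_\alpha$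 with finite-dimensional weight spaces, weights bounded below, and $T^W(z)=\sum E_{ij}\otimes t^W_{ij}(z)$, the monodromy matrix is $T^{W,L}(z)=T^W(z+a_1)_{1,L+1}T^W(z+a_2)_{2,L+1}\cdots T^W(z+a_L)_{L,L+1}\in\mathrm{End}(V_L\otimes W)$, where the subscript $(l,L+1)$ means acting on the $l$-th factor of $V_L$ and on $W$, and the transfer matrix is $t_W(z;p)=\sum_{\alpha}p^\alpha(\mathrm{Id}_{V_L}\otimes\mathrm{Tr}_{W_\alpha})(T^{W,L}(z))$, $p$ a formal variable. The Baxter Q-operator is $Q(z;p):=t_{\mathcal W^z}(0;p)$, i.e. the transfer matrix of $\mathcal W^\ell$ evaluated at spectral parameter $0$ with spin parameter $\ell=z$; it lies in $\mathrm{End}(V_L)[z][[p]]$. *)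

From HB Require Import structures.
From mathcomp Require Import all_boot all_order all_algebra.
Set Implicit Arguments. Unset Strict Implicit. Unset Printing Implicit Defensive.
Import Order.TTheory GRing.Theory Num.Theory.
Local Open Scope ring_scope.

(* Conventions.
   - The basis (v_1, v_2) of C^2 is indexed by 'I_2 : ord0 <-> v_1, 1 <-> v_2.
   - A vector of V^infty (or rather of its completion) is a coefficient
     function c : nat -> P, c n = coefficient of w_n.  Coefficients live in
     P = {poly R}, the variable 'X being the polynomial variable z.
   - Basis vectors of V_L = (C^2)^{(x) L} are indexed by
     sigma : {ffun 'I_L -> 'I_2}, i.e. v_{sigma 1} (x) ... (x) v_{sigma L}.
   - A formal power series in p with coefficients in End(V_L)[z] is a
     function k |-> (matrix (sigma,tau) |-> entry in {poly R}). *)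

Section Defs.
Variable R : numClosedFieldType.
Local Notation P := {poly R}.

(* t_{ij}(z) of the module W^ell, acting on coefficient functions:
   t11(z) w_n = (z+ell-n) w_n,  t12(z) w_n = (ell-n) w_{n+1},
   t21(z) w_n = n w_{n-1},      t22(z) w_n = (z+n) w_n. *)
Definition Wop (ell z : P) (i j : 'I_2) (c : nat -> P) : nat -> P :=
  match val i, val j with
  | 0%N, 0%N => fun n => (z + ell - n%:R) * c n
  | 0%N, _ => fun n => if n is m.+1 then (ell - m%:R) * c m else 0
  | _, 0%N => fun n => (n.+1)%:R * c n.+1
  | _, _ => fun n => (z + n%:R) * c n
  end.

Definition wvec (k : nat) : nat -> P := fun n => if n == k then 1 else 0.

Definition monoEntry (L : nat) (ell z : P) (a : 'I_L -> R)
  (sigma tau : {ffun 'I_L -> 'I_2}) : (nat -> P) -> (nat -> P) :=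
  foldr (fun l f => Wop ell (z + (a l)%:P) (sigma l) (tau l) \o f) id
        (enum 'I_L).

(* coefficient of p^k of the transfer matrix t_{W^ell}(z;p):
   (sigma,tau) entry of (Id (x) Tr_{W_k}) T^{W^ell,L}(z); W_k = C w_k. *)
Definition transferCoef (L : nat) (ell z : P) (a : 'I_L -> R) (k : nat)
  (sigma tau : {ffun 'I_L -> 'I_2}) : P :=
  monoEntry ell z a sigma tau (wvec k) k.

(* Baxter Q-operator Q(z;p) = t_{W^z}(0;p): coefficient of p^k. *)
Definition Qcoef (L : nat) (a : 'I_L -> R) (k : nat)
  (sigma tau : {ffun 'I_L -> 'I_2}) : P :=
  transferCoef 'X 0 a k sigma tau.

End Defs.

Definition inSector (L s : nat) (sigma : {ffun 'I_L -> 'I_2}) : bool :=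
  #|[pred l | sigma l == ord0]| == s.

From HB Require Import structures.
From mathcomp Require Import all_boot all_order all_algebra.
Set Implicit Arguments. Unset Strict Implicit.
Import Order.TTheory GRing.Theory Num.Theory.
Local Open Scope ring_scope.

(* Every operator t_{ij} of W^ell moves the weight of w_n by [i = 1] - [j = 1],
   so the trace over W_k of the monodromy entry (sigma, tau) vanishes unless
   sigma and tau contain v_1 equally often.  For the Q-operator (ell = z,
   constant spectral shifts a_l) t_{1j} is linear in z and t_{2j} constant,
   so an entry has degree at most the number s of v_1's in sigma.  On the
   vacuum w_0 the diagonal entry (sigma, sigma) is multiplication by
   prod_{sigma_l = 1} (z + a_l) * prod_{sigma_l = 2} a_l, of degree exactly s
   since the a_l are nonzero. *)

Lemma card_predE (T : finType) (p : pred T) : #|[pred x | p x]| = count p (enum T).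
Proof. by rewrite -sum1_card -sum1_count big_enum_cond /= (eq_bigl p). Qed.

Lemma card_ord_lt (L s : nat) : (s <= L)%N -> #|[pred l : 'I_L | (l < s)%N]| = s.
Proof.
by move=> hs; rewrite -sum1_card -(big_ord_widen _ (fun=> 1%N) hs) sum1_card card_ord.
Qed.

Lemma size_polyM_le (R : nzRingType) (p q : {poly R}) (e d : nat) :
  (size p <= e.+1)%N -> (size q <= d)%N -> (size (p * q)%R <= d + e)%N.
Proof.
move=> sp sq; apply: leq_trans (size_polyMleq _ _) _.
case: (size p) sp => [|n] sp; last by rewrite addSn /= addnC leq_add.
by rewrite (leq_trans (leq_pred _)) ?(leq_trans sq) ?leq_addr.
Qed.

Section WModule.
Variable R : numClosedFieldType.
Local Notation P := {poly R}.

Lemma Wop_support (ell z : P) (i j : 'I_2) (c : nat -> P) (n : nat) :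
  Wop ell z i j c n != 0 ->
  exists2 m, c m != 0 & (n + (j == ord0) = m + (i == ord0))%N.
Proof.
have c_neq0 (x : P) m : x * c m != 0 -> c m != 0 by apply: contraNneq => ->; rewrite mulr0.
case: i => [[|[|//]] ?]; case: j => [[|[|//]] ?]; rewrite /Wop /=.
- by move/c_neq0; exists n.
- by case: n => [|m]; rewrite ?eqxx // => /c_neq0; exists m; rewrite ?addn0 ?addn1.
- by move/c_neq0; exists n.+1; rewrite ?addn0 ?addn1.
- by move/c_neq0; exists n.
Qed.

Lemma size_Wop (ell z : P) (i j : 'I_2) (c : nat -> P) (d n : nat) :
  (size ell <= 2)%N -> (size z <= 1)%N -> (forall m, size (c m) <= d)%N ->
  (size (Wop ell z i j c n) <= d + (i == ord0))%N.
Proof.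
move=> sell sz sc.
have sD (x y : P) k : (size x <= k)%N -> (size y <= k)%N -> (size (x + y)%R <= k)%N.
  by move=> sx sy; rewrite (leq_trans (size_polyD _ _)) // geq_max sx.
have sn k : (size (k%:R : P) <= 1)%N by rewrite -polyC_natr size_polyC leq_b1.
have sB (x : P) k : (size x <= 2)%N -> (size (x - k%:R)%R <= 2)%N.
  by move=> sx; rewrite sD ?size_polyN // (leq_trans (sn k)).
case: i => [[|[|//]] ?]; case: j => [[|[|//]] ?]; rewrite /Wop /=.
- by apply: size_polyM_le => //; rewrite sB // sD // (leq_trans sz).
- by case: n => [|m]; rewrite ?size_poly0 // size_polyM_le ?sB.
- by rewrite size_polyM_le.
- by rewrite size_polyM_le ?sD.
Qed.
End WModule.

Lemma size_prod_XaddC_if (R : idomainType) (I : eqType) (r : seq I) (p : pred I)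
    (b : I -> R) :
  (forall i, b i != 0) ->
  size (\prod_(i <- r) (if p i then 'X + (b i)%:P else (b i)%:P)) = (count p r).+1.
Proof.
move=> b_neq0; elim: r => [|i r IH]; first by rewrite big_nil size_poly1.
have XaddC_neq0 : 'X + (b i)%:P != 0 by rewrite -size_poly_eq0 size_XaddC.
rewrite big_cons /= size_mul ?IH; last by rewrite -size_poly_eq0 IH.
  by case: (p i); rewrite ?size_XaddC ?size_polyC ?b_neq0.
by case: (p i); rewrite ?polyC_eq0.
Qed.

Section Monodromy.
Variables (R : numClosedFieldType) (L : nat) (a : 'I_L -> R).
Local Notation P := {poly R}.
Implicit Types (ell z : P) (sigma tau : {ffun 'I_L -> 'I_2}) (r : seq 'I_L).

Definition monoProd ell z sigma tau r : (nat -> P) -> nat -> P :=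
  foldr (fun l f => Wop ell (z + (a l)%:P) (sigma l) (tau l) \o f) id r.

Lemma Qcoef_monoProd k sigma tau :
  Qcoef a k sigma tau = monoProd 'X 0 sigma tau (enum 'I_L) (wvec R k) k.
Proof. by []. Qed.

Lemma monoProd_cons ell z sigma tau l r c :
  monoProd ell z sigma tau (l :: r) c =
  Wop ell (z + (a l)%:P) (sigma l) (tau l) (monoProd ell z sigma tau r c).
Proof. by []. Qed.

Definition count_v1 sigma r : nat := count (fun l => sigma l == ord0) r.

Lemma count_v1_cons sigma l r :
  count_v1 sigma (l :: r) = ((sigma l == ord0) + count_v1 sigma r)%N.
Proof. by []. Qed.

Lemma inSectorE s sigma : inSector s sigma = (count_v1 sigma (enum 'I_L) == s).
Proof. by rewrite /inSector card_predE. Qed.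

Lemma monoProd_support ell z sigma tau r c n :
  monoProd ell z sigma tau r c n != 0 ->
  exists2 m, c m != 0 & (n + count_v1 tau r = m + count_v1 sigma r)%N.
Proof.
elim: r n => [|l r IH] n; first by exists n.
case/Wop_support=> m1 /IH [m cm_neq0 Em1] En.
by exists m; rewrite // !count_v1_cons addnA En addnAC Em1 addnAC -addnA.
Qed.

Lemma size_monoProd ell z sigma tau r (c : nat -> P) d n :
  (size ell <= 2)%N -> (size z <= 1)%N -> (forall m, size (c m) <= d)%N ->
  (size (monoProd ell z sigma tau r c n) <= d + count_v1 sigma r)%N.
Proof.
move=> sell sz sc; elim: r n => [|l r IH] n; first by rewrite addn0.
rewrite monoProd_cons count_v1_cons addnCA addnC; apply: size_Wop sell _ IH.
by apply: leq_trans (size_polyD _ _) _; rewrite geq_max sz size_polyC leq_b1.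
Qed.

Lemma monoProd_vacuum ell z sigma r n :
  monoProd ell z sigma sigma r (wvec R 0) n =
  \prod_(l <- r) (if sigma l == ord0 then ell + (z + (a l)%:P) else z + (a l)%:P)
    * wvec R 0 n.
Proof.
elim: r n => [|l r IH] n; first by rewrite big_nil mul1r.
rewrite monoProd_cons big_cons /Wop; case: (sigma l) => [[|[|//]] ?] /=; rewrite IH.
- case: n => [|n]; last by rewrite /wvec !mulr0.
  by rewrite mulr0n subr0 addrC !mulrA.
- case: n => [|n]; last by rewrite /wvec !mulr0.
  by rewrite mulr0n addr0 !mulrA.
Qed.
End Monodromy.

Theorem mainTheorem15 (R : numClosedFieldType) (L : nat) (hL : (0 < L)%N)
  (a : 'I_L -> R) (ha : forall l, a l != 0) (s : nat) (hs : (s <= L)%N) :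
  (* V_L^s is stable under Q(z;p) (for every coefficient of p^k) *)
  (forall (k : nat) (sigma tau : {ffun 'I_L -> 'I_2}),
      inSector s tau -> Qcoef a k sigma tau != 0 -> inSector s sigma) /\
  (* Q(z;p)|_{V_L^s} has degree <= s in z *)
  (forall (k : nat) (sigma tau : {ffun 'I_L -> 'I_2}),
      inSector s sigma -> inSector s tau ->
      (size (Qcoef a k sigma tau) <= s.+1)%N) /\
  (* ... and its z^s coefficient (in End(V_L^s)[[p]]) is nonzero *)
  (exists (k : nat) (sigma tau : {ffun 'I_L -> 'I_2}),
      [/\ inSector s sigma, inSector s tau & size (Qcoef a k sigma tau) = s.+1]).
Proof.
split; [|split].
- move=> k sigma tau; rewrite !inSectorE Qcoef_monoProd => /eqP <-.
  case/monoProd_support=> m; rewrite /wvec /=.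
  by case: (m =P k) => [-> _ /addnI ->|_]; rewrite ?eqxx.
- move=> k sigma tau; rewrite inSectorE Qcoef_monoProd => /eqP <- _.
  rewrite -add1n; apply: size_monoProd; rewrite ?size_polyX ?size_poly0 // => m.
  by rewrite /wvec; case: eqP; rewrite ?size_poly1 ?size_poly0.
pose sigma := [ffun l : 'I_L => if (l < s)%N then ord0 else ord_max : 'I_2].
have sigma_s : inSector s sigma.
  rewrite /inSector -[s in _ == s](card_ord_lt hs); apply/eqP/eq_card => l.
  by rewrite !inE ffunE; case: ifP.
exists 0%N, sigma, sigma; split => //.
rewrite Qcoef_monoProd monoProd_vacuum /wvec eqxx mulr1.
under eq_bigr do rewrite add0r.
by rewrite size_prod_XaddC_if // -card_predE; apply/eqP.
Qed.
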